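(* Let $\mathbb{R}$ be a generalized Reedy category and $\mathcal{E}$ an $\mathbb{R}$-projective Quillen model category in which the relevant limits and colimits exist. Let $f:A\to B$ be a trivial Reedy cofibration in $\mathcal{E}^{\mathbb{R}}$ such that for every object $r$ of $\mathbb{R}$ the induced map $L_r(f):L_r(A)\to L_r(B)$ is a trivial cofibration in $\mathcal{E}$. Then $f$ has the left lifting property with respect to Reedy fibrations.
   Context: A generalized Reedy category is a small category $\mathbb{R}$ with wide subcategories $\mathbb{R}^+,\mathbb{R}^-$ and degree $d:\mathrm{Ob}(\mathbb{R})\to\mathbb{N}$ such that (i) non-invertible morphisms of $\mathbb{R}^+$ (resp. $\mathbb{R}^-$) strictly raise (resp. lower) degree, isomorphisms preserve degree; (ii) $\mathbb{R}^+\cap\mathbb{R}^-=\mathrm{Iso}(\mathbb{R})$; (iii) every morphism factors as $gh$ with $g\in\mathbb{R}^+,h\in\mathbb{R}^-$, uniquely up to isomorphism; (iv) if $\theta f=f$ with $\theta$ an isomorphism and $f\in\mathbb{R}^-$ then $\theta$ is an identity. $L_r(X)=\mathrm{colim}X_s$ over the category $\mathbb{R}^+(r)$ of non-invertible $u:s\to r$ in $\mathbb{R}^+$ (morphisms $w$ with $u=u'w$); $M_r(X)=\lim X_s$ over the category $\mathbb{R}^-(r)$ of non-invertible $u:r\to s$ in $\mathbb{R}^-$ (morphisms $w$ with $u'=wu$); both carry $\mathrm{Aut}(r)$-actions, with equivariant maps $L_r(X)\to X_r\to M_r(X)$. $\mathcal{E}$ is $\mathbb{R}$-projective if each $\mathcal{E}^{\mathrm{Aut}(r)}$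 (objects with $\mathrm{Aut}(r)$-action) carries the projective model structure (weak equivalences and fibrations detected on underlying maps). A map $f:X\to Y$ is a Reedy cofibration if each $X_r\cup_{L_r(X)}L_r(Y)\to Y_r$ is a cofibration in $\mathcal{E}^{\mathrm{Aut}(r)}$, a Reedy weak equivalence if each $f_r$ is a weak equivalence, a Reedy fibration if each $X_r\to M_r(X)\times_{M_r(Y)}Y_r$ is a fibration; a trivial Reedy cofibration is a Reedy cofibration that is a Reedy weak equivalence. *)

Set Implicit Arguments.
Unset Strict Implicit.

Record Category := {
  Ob :> Type;
  Hom : Ob -> Ob -> Type;
  idm : forall a, Hom a a;
  comp : forall a b c, Hom b c -> Hom a b -> Hom a c;
  comp_idl : forall a b (f : Hom a b), comp (idm b) f = f;
  comp_idr : forall a b (f : Hom a b), comp f (idm a) = f;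
  comp_assoc : forall a b c d (f : Hom a b) (g : Hom b c) (h : Hom c d),
      comp h (comp g f) = comp (comp h g) f }.
Arguments Hom {_} _ _.
Arguments idm {_} _.
Arguments comp {_ _ _ _} _ _.
Notation "g ∘ f" := (comp g f) (at level 40, left associativity).

Definition iso (C : Category) (a b : C) (f : Hom a b) : Prop :=
  exists g : Hom b a, g ∘ f = idm a /\ f ∘ g = idm b.

Definition lifts (O : Type) (H : O -> O -> Type)
  (cmp : forall a b c, H b c -> H a b -> H a c)
  (a b x y : O) (i : H a b) (p : H x y) : Prop :=
  forall (u : H a x) (v : H b y), cmp _ _ _ p u = cmp _ _ _ v i ->
    exists l : H b x, cmp _ _ _ l i = u /\ cmp _ _ _ p l = v.

Definition retract_of (O : Type) (H : O -> O -> Type)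
  (cmp : forall a b c, H b c -> H a b -> H a c) (id : forall a, H a a)
  (a b c d : O) (f : H a b) (g : H c d) : Prop :=
  exists (s1 : H a c) (r1 : H c a) (s2 : H b d) (r2 : H d b),
    cmp _ _ _ r1 s1 = id a /\ cmp _ _ _ r2 s2 = id b /\
    cmp _ _ _ g s1 = cmp _ _ _ s2 f /\ cmp _ _ _ f r1 = cmp _ _ _ r2 g.

Definition is_pushout_raw (O : Type) (H : O -> O -> Type)
  (cmp : forall a b c, H b c -> H a b -> H a c)
  (a b c P : O) (f : H a b) (g : H a c) (i1 : H b P) (i2 : H c P) : Prop :=
  cmp _ _ _ i1 f = cmp _ _ _ i2 g /\
  forall (Z : O) (x : H b Z) (y : H c Z), cmp _ _ _ x f = cmp _ _ _ y g ->
    exists h : H P Z, (cmp _ _ _ h i1 = x /\ cmp _ _ _ h i2 = y) /\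
      forall h' : H P Z, cmp _ _ _ h' i1 = x -> cmp _ _ _ h' i2 = y -> h' = h.

Definition is_pullback_raw (O : Type) (H : O -> O -> Type)
  (cmp : forall a b c, H b c -> H a b -> H a c)
  (b c d P : O) (f : H b d) (g : H c d) (q1 : H P b) (q2 : H P c) : Prop :=
  cmp _ _ _ f q1 = cmp _ _ _ g q2 /\
  forall (Z : O) (x : H Z b) (y : H Z c), cmp _ _ _ f x = cmp _ _ _ g y ->
    exists h : H Z P, (cmp _ _ _ q1 h = x /\ cmp _ _ _ q2 h = y) /\
      forall h' : H Z P, cmp _ _ _ q1 h' = x -> cmp _ _ _ q2 h' = y -> h' = h.

Record IsModel (O : Type) (H : O -> O -> Type)
  (cmp : forall a b c, H b c -> H a b -> H a c) (id : forall a, H a a)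
  (W C F : forall a b, H a b -> Prop) : Prop := {
  mc_initial : exists z : O, forall x : O, exists f : H z x,
      forall g : H z x, g = f;
  mc_terminal : exists t : O, forall x : O, exists f : H x t,
      forall g : H x t, g = f;
  mc_pushouts : forall a b c (f : H a b) (g : H a c),
      exists P (i1 : H b P) (i2 : H c P), is_pushout_raw cmp f g i1 i2;
  mc_pullbacks : forall b c d (f : H b d) (g : H c d),
      exists P (q1 : H P b) (q2 : H P c), is_pullback_raw cmp f g q1 q2;
  mc_2of3_comp : forall a b c (f : H a b) (g : H b c),
      W _ _ f -> W _ _ g -> W _ _ (cmp _ _ _ g f);
  mc_2of3_left : forall a b c (f : H a b) (g : H b c),
      W _ _ g -> W _ _ (cmp _ _ _ g f) -> W _ _ f;
  mc_2of3_right : forall a b c (f : H a b) (g : H b c),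
      W _ _ f -> W _ _ (cmp _ _ _ g f) -> W _ _ g;
  mc_retract_W : forall a b c d (f : H a b) (g : H c d),
      retract_of cmp id f g -> W _ _ g -> W _ _ f;
  mc_retract_C : forall a b c d (f : H a b) (g : H c d),
      retract_of cmp id f g -> C _ _ g -> C _ _ f;
  mc_retract_F : forall a b c d (f : H a b) (g : H c d),
      retract_of cmp id f g -> F _ _ g -> F _ _ f;
  mc_lift_tcof : forall a b x y (i : H a b) (p : H x y),
      C _ _ i -> W _ _ i -> F _ _ p -> lifts cmp i p;
  mc_lift_tfib : forall a b x y (i : H a b) (p : H x y),
      C _ _ i -> F _ _ p -> W _ _ p -> lifts cmp i p;
  mc_fact_tcof : forall a b (f : H a b), exists c (i : H a c) (p : H c b),
      C _ _ i /\ W _ _ i /\ F _ _ p /\ f = cmp _ _ _ p i;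
  mc_fact_tfib : forall a b (f : H a b), exists c (i : H a c) (p : H c b),
      C _ _ i /\ F _ _ p /\ W _ _ p /\ f = cmp _ _ _ p i }.

Definition MorClass (C : Category) := forall a b : C, Hom a b -> Prop.

Definition is_model_category (E : Category) (W Cf F : MorClass E) : Prop :=
  IsModel (@comp E) (@idm E) W Cf F.

Record GenReedy (R : Category) := {
  plus : MorClass R;
  minus : MorClass R;
  deg : R -> nat;
  plus_id : forall a, plus (idm a);
  plus_comp : forall a b c (f : Hom a b) (g : Hom b c),
      plus f -> plus g -> plus (g ∘ f);
  minus_id : forall a, minus (idm a);
  minus_comp : forall a b c (f : Hom a b) (g : Hom b c),
      minus f -> minus g -> minus (g ∘ f);
  deg_plus : forall a b (f : Hom a b), plus f -> ~ iso f -> deg a < deg b;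
  deg_minus : forall a b (f : Hom a b), minus f -> ~ iso f -> deg b < deg a;
  deg_iso : forall a b (f : Hom a b), iso f -> deg a = deg b;
  plus_minus_iso : forall a b (f : Hom a b), (plus f /\ minus f) <-> iso f;
  fact_ex : forall a b (f : Hom a b), exists c (h : Hom a c) (g : Hom c b),
      minus h /\ plus g /\ f = g ∘ h;
  fact_uniq : forall a b c c' (h : Hom a c) (g : Hom c b) (h' : Hom a c')
      (g' : Hom c' b), minus h -> plus g -> minus h' -> plus g' ->
      g ∘ h = g' ∘ h' ->
      exists th : Hom c c', iso th /\ th ∘ h = h' /\ g' ∘ th = g;
  iso_fix_minus : forall a b (f : Hom a b) (th : Hom b b),
      iso th -> minus f -> th ∘ f = f -> th = idm b }.
Arguments plus {R} _ {a b} _.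
Arguments minus {R} _ {a b} _.

Record Functor (R E : Category) := {
  fob :> R -> E;
  fmap : forall a b : R, Hom a b -> Hom (fob a) (fob b);
  fmap_id : forall a, fmap (idm a) = idm (fob a);
  fmap_comp : forall a b c (f : Hom a b) (g : Hom b c),
      fmap (g ∘ f) = fmap g ∘ fmap f }.
Arguments fmap {R E} _ {a b} _.

Record NatTrans (R E : Category) (X Y : Functor R E) := {
  ntc :> forall r : R, Hom (X r) (Y r);
  ntc_nat : forall a b (u : Hom a b), ntc b ∘ fmap X u = fmap Y u ∘ ntc a }.

Definition Aut (R : Category) (r : R) := { th : Hom r r | iso th }.

Definition is_action (R E : Category) (r : R) (x : E) (act : Aut r -> Hom x x)
  : Prop :=
  (forall h : iso (idm r), act (exist _ (idm r) h) = idm x) /\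
  (forall (t t' : Aut r) (h : iso (proj1_sig t ∘ proj1_sig t')),
      act (exist _ (proj1_sig t ∘ proj1_sig t') h) = act t ∘ act t').

Definition equivariant (R E : Category) (r : R) (x y : E)
  (ax : Aut r -> Hom x x) (ay : Aut r -> Hom y y) (h : Hom x y) : Prop :=
  forall t : Aut r, h ∘ ax t = ay t ∘ h.

(* Cofibrations of the projective model structure on E^{Aut(r)}:
   maps with the LLP (in E^{Aut(r)}) w.r.t. equivariant maps whose
   underlying map is a trivial fibration. *)
Definition cofG (R E : Category) (W F : MorClass E) (r : R) (x y : E)
  (ax : Aut r -> Hom x x) (ay : Aut r -> Hom y y) (k : Hom x y) : Prop :=
  forall (u v : E) (au : Aut r -> Hom u u) (av : Aut r -> Hom v v)
    (p : Hom u v), is_action au -> is_action av -> equivariant au av p ->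
    W _ _ p -> F _ _ p ->
    forall (a : Hom x u) (b : Hom y v),
      equivariant ax au a -> equivariant ay av b -> p ∘ a = b ∘ k ->
      exists l : Hom y u, equivariant ay au l /\ l ∘ k = a /\ p ∘ l = b.

Definition GObj (R E : Category) (r : R) :=
  { x : E & { act : Aut r -> Hom x x | is_action act } }.
Definition gact (R E : Category) (r : R) (X : GObj E r) : Aut r -> Hom (projT1 X) (projT1 X) :=
  proj1_sig (projT2 X).
Definition GHom (R E : Category) (r : R) (X Y : GObj E r) :=
  { h : Hom (projT1 X) (projT1 Y) | equivariant (gact X) (gact Y) h }.

Lemma equiv_comp (R E : Category) (r : R) (x y z : E) (ax : Aut r -> Hom x x)
  (ay : Aut r -> Hom y y) (az : Aut r -> Hom z z) (f : Hom x y) (g : Hom y z) :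
  equivariant ax ay f -> equivariant ay az g -> equivariant ax az (g ∘ f).
Proof.
  intros Hf Hg t. rewrite <- comp_assoc, Hf, comp_assoc, Hg, comp_assoc.
  reflexivity.
Qed.

Lemma equiv_id (R E : Category) (r : R) (x : E) (ax : Aut r -> Hom x x) :
  equivariant ax ax (idm x).
Proof. intros t. rewrite comp_idl, comp_idr. reflexivity. Qed.

Definition GComp (R E : Category) (r : R) (X Y Z : GObj E r)
  (g : GHom Y Z) (f : GHom X Y) : GHom X Z :=
  exist _ (proj1_sig g ∘ proj1_sig f) (equiv_comp (proj2_sig f) (proj2_sig g)).
Definition GId (R E : Category) (r : R) (X : GObj E r) : GHom X X :=
  exist _ (idm (projT1 X)) (equiv_id (gact X)).

(* E is R-projective: each E^{Aut(r)} carries the projective model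
   structure (weak equivalences and fibrations detected on underlying
   maps, cofibrations = LLP w.r.t. trivial fibrations). *)
Definition R_projective (R E : Category) (W Cf F : MorClass E) : Prop :=
  forall r : R,
    IsModel (@GComp R E r) (@GId R E r)
      (fun X Y h => W _ _ (proj1_sig h))
      (fun X Y h => cofG W F (gact X) (gact Y) (proj1_sig h))
      (fun X Y h => F _ _ (proj1_sig h)).

Section Latching.
Context (R E : Category) (RS : GenReedy R).

Definition LFam (X : Functor R E) (r : R) (Z : E) :=
  forall (s : R) (u : Hom s r), plus RS u -> ~ iso u -> Hom (X s) Z.

Definition lcocone (X : Functor R E) (r : R) (Z : E) (c : LFam X r Z) : Prop :=
  forall (s s' : R) (u : Hom s r) (u' : Hom s' r) (w : Hom s s')
    (hu : plus RS u) (nu : ~ iso u) (hu' : plus RS u') (nu' : ~ iso u'),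
    plus RS w -> u = u' ∘ w -> c s' u' hu' nu' ∘ fmap X w = c s u hu nu.

Definition is_latching (X : Functor R E) (r : R) (L : E) (i : LFam X r L) : Prop :=
  lcocone i /\
  forall (Z : E) (c : LFam X r Z), lcocone c ->
    exists h : Hom L Z,
      (forall s u hu nu, h ∘ i s u hu nu = c s u hu nu) /\
      forall h' : Hom L Z, (forall s u hu nu, h' ∘ i s u hu nu = c s u hu nu) ->
        h' = h.

Definition lat_can (X : Functor R E) (r : R) (L : E) (i : LFam X r L)
  (l : Hom L (X r)) : Prop :=
  forall s u hu nu, l ∘ i s u hu nu = fmap X u.

Definition lat_act (X : Functor R E) (r : R) (L : E) (i : LFam X r L)
  (a : Aut r -> Hom L L) : Prop :=
  forall (t : Aut r) s (u : Hom s r) hu nu hu' nu',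
    a t ∘ i s u hu nu = i s (proj1_sig t ∘ u) hu' nu'.

Definition lat_map (X Y : Functor R E) (f : NatTrans X Y) (r : R)
  (LX : E) (iX : LFam X r LX) (LY : E) (iY : LFam Y r LY) (g : Hom LX LY) : Prop :=
  forall s u hu nu, g ∘ iX s u hu nu = iY s u hu nu ∘ f s.

Definition MFam (X : Functor R E) (r : R) (Z : E) :=
  forall (s : R) (u : Hom r s), minus RS u -> ~ iso u -> Hom Z (X s).

Definition mcone (X : Functor R E) (r : R) (Z : E) (c : MFam X r Z) : Prop :=
  forall (s s' : R) (u : Hom r s) (u' : Hom r s') (w : Hom s s')
    (hu : minus RS u) (nu : ~ iso u) (hu' : minus RS u') (nu' : ~ iso u'),
    minus RS w -> u' = w ∘ u -> fmap X w ∘ c s u hu nu = c s' u' hu' nu'.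

Definition is_matching (X : Functor R E) (r : R) (M : E) (q : MFam X r M) : Prop :=
  mcone q /\
  forall (Z : E) (c : MFam X r Z), mcone c ->
    exists h : Hom Z M,
      (forall s u hu nu, q s u hu nu ∘ h = c s u hu nu) /\
      forall h' : Hom Z M, (forall s u hu nu, q s u hu nu ∘ h' = c s u hu nu) ->
        h' = h.

Definition mat_can (X : Functor R E) (r : R) (M : E) (q : MFam X r M)
  (m : Hom (X r) M) : Prop :=
  forall s u hu nu, q s u hu nu ∘ m = fmap X u.

Definition mat_map (X Y : Functor R E) (p : NatTrans X Y) (r : R)
  (MX : E) (qX : MFam X r MX) (MY : E) (qY : MFam Y r MY) (g : Hom MX MY) : Prop :=
  forall s u hu nu, qY s u hu nu ∘ g = p s ∘ qX s u hu nu.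

Definition is_pushout (a b c P : E) (f : Hom a b) (g : Hom a c)
  (i1 : Hom b P) (i2 : Hom c P) : Prop := is_pushout_raw (@comp E) f g i1 i2.
Definition is_pullback (b c d P : E) (f : Hom b d) (g : Hom c d)
  (q1 : Hom P b) (q2 : Hom P c) : Prop := is_pullback_raw (@comp E) f g q1 q2.

Local Unset Implicit Arguments.
Context (W Cf F : MorClass E).
Local Set Implicit Arguments.

(* For every r: the relative latching map X_r ∪_{L_r X} L_r Y -> Y_r is a
   cofibration in E^{Aut(r)} (with its induced Aut(r)-actions).  Stated
   for every choice of the (co)limits involved; they are unique up to
   unique isomorphism. *)
Definition reedy_cofibration (X Y : Functor R E) (f : NatTrans X Y) : Prop :=
  forall (r : R) (LX : E) (iX : LFam X r LX) (LY : E) (iY : LFam Y r LY),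
    is_latching iX -> is_latching iY ->
    forall (lX : Hom LX (X r)) (lY : Hom LY (Y r)) (g : Hom LX LY)
      (aY : Aut r -> Hom LY LY),
      lat_can iX lX -> lat_can iY lY -> lat_map f iX iY g -> lat_act iY aY ->
    forall (P : E) (i1 : Hom (X r) P) (i2 : Hom LY P),
      is_pushout lX g i1 i2 ->
    forall (k : Hom P (Y r)) (aP : Aut r -> Hom P P),
      k ∘ i1 = f r -> k ∘ i2 = lY ->
      (forall t : Aut r, aP t ∘ i1 = i1 ∘ fmap X (proj1_sig t) /\
                         aP t ∘ i2 = i2 ∘ aY t) ->
      cofG W F aP (fun t => fmap Y (proj1_sig t)) k.

Definition reedy_weq (X Y : Functor R E) (f : NatTrans X Y) : Prop :=
  forall r : R, W _ _ (f r).

Definition trivial_reedy_cofibration (X Y : Functor R E) (f : NatTrans X Y) : Prop :=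
  reedy_cofibration f /\ reedy_weq f.

(* For every r: X_r -> M_r(X) x_{M_r(Y)} Y_r is a fibration (in
   E^{Aut(r)}, i.e. its underlying map is a fibration in E). *)
Definition reedy_fibration (X Y : Functor R E) (p : NatTrans X Y) : Prop :=
  forall (r : R) (MX : E) (qX : MFam X r MX) (MY : E) (qY : MFam Y r MY),
    is_matching qX -> is_matching qY ->
    forall (mX : Hom (X r) MX) (mY : Hom (Y r) MY) (g : Hom MX MY),
      mat_can qX mX -> mat_can qY mY -> mat_map p qX qY g ->
    forall (Q : E) (q1 : Hom Q MX) (q2 : Hom Q (Y r)),
      is_pullback g mY q1 q2 ->
    forall k : Hom (X r) Q, q1 ∘ k = mX -> q2 ∘ k = p r -> F _ _ k.

Definition latching_trivial_cofibrations (X Y : Functor R E) (f : NatTrans X Y)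
  : Prop :=
  forall (r : R) (LX : E) (iX : LFam X r LX) (LY : E) (iY : LFam Y r LY),
    is_latching iX -> is_latching iY ->
    forall g : Hom LX LY, lat_map f iX iY g -> Cf _ _ g /\ W _ _ g.

Definition llp_nat (X Y X' Y' : Functor R E) (f : NatTrans X Y) (p : NatTrans X' Y')
  : Prop :=
  forall (a : NatTrans X X') (b : NatTrans Y Y'),
    (forall r, p r ∘ a r = b r ∘ f r) ->
    exists l : NatTrans Y X', forall r, l r ∘ f r = a r /\ p r ∘ l r = b r.

End Latching.

(* The lift [B -> X] is built by induction on the degree.  Given it on
   objects of degree < n, each object c of degree n poses a lifting problem
   in E^Aut(c): the relative latching map A_c ∪_{L_c A} L_c B -> B_c of f
   against the relative matching map X_c -> M_c X ×_{M_c Y} Y_c of p.  The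
   former is a cofibration because f is a Reedy cofibration, and a weak
   equivalence by two-out-of-three, since its composite with the pushout of
   the trivial cofibration L_c f is f_c; the latter is a fibration because p is
   a Reedy fibration.  An equivariant solution, chosen once per isomorphism
   class and transported, is natural for isomorphisms of degree n; naturality
   for the remaining maps follows from the Reedy factorisations. *)

From Stdlib Require Import ProofIrrelevance ClassicalEpsilon ChoiceFacts
  FunctionalExtensionality PropExtensionality Arith Lia.

Set Implicit Arguments.
Unset Strict Implicit.

Lemma comp_rw (C : Category) (a b c d : C) (x : Hom b c) (y : Hom a b)
  (z : Hom a c) (w : Hom d a) : x ∘ y = z -> x ∘ (y ∘ w) = z ∘ w.
Proof. intros <-. apply comp_assoc. Qed.

(* Composites are kept right-associated; [rw e] rewrites with [e : x ∘ y = z]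
   also where [x ∘ y] is the head of a longer chain [x ∘ (y ∘ w)]. *)
Ltac assoc_r := repeat rewrite <- comp_assoc.
Ltac rw e :=
  first [ rewrite e
        | rewrite (comp_rw _ (e))
        | rewrite (comp_rw _ (e _))
        | rewrite (comp_rw _ (e _ _))
        | rewrite (comp_rw _ (e _ _ _))
        | rewrite (comp_rw _ (e _ _ _ _))
        | rewrite (comp_rw _ (e _ _ _ _ _))
        | rewrite (comp_rw _ (e _ _ _ _ _ _)) ]; assoc_r.

Section Isomorphisms.
Variable C : Category.

Lemma iso_id (a : C) : iso (idm a).
Proof. exists (idm a). rewrite comp_idl. auto. Qed.

Lemma iso_comp (a b c : C) (f : Hom a b) (g : Hom b c) :
  iso f -> iso g -> iso (g ∘ f).
Proof.
  intros [f' [Hf1 Hf2]] [g' [Hg1 Hg2]]. exists (f' ∘ g'). split.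
  - rewrite comp_assoc, <- (comp_assoc g g' f'), Hg1, comp_idr. exact Hf1.
  - rewrite comp_assoc, <- (comp_assoc f' f g), Hf2, comp_idr. exact Hg2.
Qed.

Lemma iso_of_inverse (a b : C) (f : Hom a b) (g : Hom b a) :
  g ∘ f = idm a -> f ∘ g = idm b -> iso g.
Proof. intros. exists f. split; auto. Qed.

Definition iso_inverse (a b : C) (f : Hom a b) (H : iso f) :
  { g : Hom b a | g ∘ f = idm a /\ f ∘ g = idm b } :=
  constructive_indefinite_description _ H.

Lemma not_iso_comp_l (a b c : C) (u : Hom a b) (t : Hom b c) :
  iso t -> ~ iso u -> ~ iso (t ∘ u).
Proof.
  intros Ht Nu Htu. apply Nu. destruct (iso_inverse Ht) as [t' [H1 H2]].
  replace u with (t' ∘ (t ∘ u)).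
  - apply iso_comp; auto. eapply iso_of_inverse; eauto.
  - rewrite comp_assoc, H1, comp_idl. reflexivity.
Qed.

Lemma not_iso_comp_r (a b c : C) (u : Hom b c) (t : Hom a b) :
  iso t -> ~ iso u -> ~ iso (u ∘ t).
Proof.
  intros Ht Nu Htu. apply Nu. destruct (iso_inverse Ht) as [t' [H1 H2]].
  replace u with ((u ∘ t) ∘ t').
  - apply iso_comp; auto. eapply iso_of_inverse; eauto.
  - rewrite <- comp_assoc, H2, comp_idr. reflexivity.
Qed.

End Isomorphisms.

Section ReedyDegrees.
Variables (R : Category) (RS : GenReedy R).

Lemma plus_iso (a b : R) (t : Hom a b) : iso t -> plus RS t.
Proof. intros H. apply (plus_minus_iso RS t) in H. tauto. Qed.

Lemma minus_iso (a b : R) (t : Hom a b) : iso t -> minus RS t.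
Proof. intros H. apply (plus_minus_iso RS t) in H. tauto. Qed.

Lemma deg_plus_le (a b : R) (u : Hom a b) : plus RS u -> deg RS a <= deg RS b.
Proof.
  intros Hu. destruct (classic (iso u)) as [Hi|Hn].
  - rewrite (deg_iso RS Hi). auto.
  - apply Nat.lt_le_incl, (deg_plus Hu Hn).
Qed.

Lemma deg_minus_le (a b : R) (u : Hom a b) : minus RS u -> deg RS b <= deg RS a.
Proof.
  intros Hu. destruct (classic (iso u)) as [Hi|Hn].
  - rewrite (deg_iso RS Hi). auto.
  - apply Nat.lt_le_incl, (deg_minus Hu Hn).
Qed.

Lemma plus_aut_comp (c : R) (t : Aut c) (s : R) (u : Hom s c) :
  plus RS u -> plus RS (proj1_sig t ∘ u).
Proof. intros h. apply plus_comp; auto. apply plus_iso, (proj2_sig t). Qed.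

Lemma not_iso_aut_comp (c : R) (t : Aut c) (s : R) (u : Hom s c) :
  ~ iso u -> ~ iso (proj1_sig t ∘ u).
Proof. apply not_iso_comp_l, (proj2_sig t). Qed.

Lemma minus_comp_aut (c : R) (t : Aut c) (s : R) (u : Hom c s) :
  minus RS u -> minus RS (u ∘ proj1_sig t).
Proof. intros h. apply minus_comp; auto. apply minus_iso, (proj2_sig t). Qed.

Lemma not_iso_comp_aut (c : R) (t : Aut c) (s : R) (u : Hom c s) :
  ~ iso u -> ~ iso (u ∘ proj1_sig t).
Proof. apply not_iso_comp_r, (proj2_sig t). Qed.

End ReedyDegrees.
Arguments plus_aut_comp {R} RS {c} t {s u} _.
Arguments minus_comp_aut {R} RS {c} t {s u} _.
Arguments not_iso_aut_comp {R c} t {s u} _ _.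
Arguments not_iso_comp_aut {R c} t {s u} _ _.

Section ModelCategory.
Local Unset Implicit Arguments.
Variables (E : Category) (W Cf F : MorClass E).
Local Set Implicit Arguments.
Hypothesis HE : is_model_category W Cf F.

Lemma pushout_ext (a b c P Z : E) (f : Hom a b) (g : Hom a c) (i1 : Hom b P)
  (i2 : Hom c P) (h1 h2 : Hom P Z) :
  is_pushout f g i1 i2 -> h1 ∘ i1 = h2 ∘ i1 -> h1 ∘ i2 = h2 ∘ i2 -> h1 = h2.
Proof.
  intros [Hc Hu] e1 e2. destruct (Hu Z (h2 ∘ i1) (h2 ∘ i2)) as [h [_ Hun]].
  - simpl. rewrite <- !comp_assoc, Hc. reflexivity.
  - simpl in Hun. rewrite (Hun h1), (Hun h2); auto.
Qed.

Lemma pushout_factor (a b c P Z : E) (f : Hom a b) (g : Hom a c) (i1 : Hom b P)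
  (i2 : Hom c P) (x : Hom b Z) (y : Hom c Z) :
  is_pushout f g i1 i2 -> x ∘ f = y ∘ g ->
  exists h : Hom P Z, h ∘ i1 = x /\ h ∘ i2 = y.
Proof. intros [_ Hu] e. destruct (Hu Z x y e) as [h [[H1 H2] _]]. eauto. Qed.

Lemma pullback_ext (b c d P Z : E) (f : Hom b d) (g : Hom c d) (q1 : Hom P b)
  (q2 : Hom P c) (h1 h2 : Hom Z P) :
  is_pullback f g q1 q2 -> q1 ∘ h1 = q1 ∘ h2 -> q2 ∘ h1 = q2 ∘ h2 -> h1 = h2.
Proof.
  intros [Hc Hu] e1 e2. destruct (Hu Z (q1 ∘ h2) (q2 ∘ h2)) as [h [_ Hun]].
  - simpl. rewrite !comp_assoc, Hc. reflexivity.
  - simpl in Hun. rewrite (Hun h1), (Hun h2); auto.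
Qed.

Lemma pullback_factor (b c d P Z : E) (f : Hom b d) (g : Hom c d) (q1 : Hom P b)
  (q2 : Hom P c) (x : Hom Z b) (y : Hom Z c) :
  is_pullback f g q1 q2 -> f ∘ x = g ∘ y ->
  exists h : Hom Z P, q1 ∘ h = x /\ q2 ∘ h = y.
Proof. intros [_ Hu] e. destruct (Hu Z x y e) as [h [[H1 H2] _]]. eauto. Qed.

(* The retract argument: factor [i] as a trivial cofibration followed by a
   fibration and lift [i] against that fibration. *)
Lemma weq_of_llp_fibrations (a b : E) (i : Hom a b) :
  (forall x y (p : Hom x y), F _ _ p -> lifts (@comp E) i p) -> W _ _ i.
Proof.
  intros Hl.
  destruct (mc_fact_tcof HE i) as [c [j [q [Cj [Wj [Fq Eq]]]]]].
  destruct (Hl _ _ q Fq j (idm b)) as [l [H1 H2]].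
  { simpl. rewrite comp_idl. symmetry. exact Eq. }
  apply (mc_retract_W HE (f := i) (g := j)); [|exact Wj].
  exists (idm a), (idm a), l, q. simpl in *.
  rewrite !comp_idl, comp_idr. repeat split; auto.
  rewrite comp_idr. exact Eq.
Qed.

Lemma pushout_trivial_cofibration_llp (a b c P : E) (f : Hom a b) (g : Hom a c)
  (i1 : Hom b P) (i2 : Hom c P) :
  is_pushout f g i1 i2 -> Cf _ _ g -> W _ _ g ->
  forall x y (p : Hom x y), F _ _ p -> lifts (@comp E) i1 p.
Proof.
  intros po Cg Wg x y p Fp u v Hsq. simpl in *.
  destruct (mc_lift_tcof HE Cg Wg Fp (u := u ∘ f) (v := v ∘ i2)) as [l [H1 H2]].
  { simpl. rewrite comp_assoc, Hsq, <- comp_assoc, (proj1 po), comp_assoc.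
    reflexivity. }
  simpl in *.
  destruct (pushout_factor po (eq_sym H1)) as [h [Hh1 Hh2]].
  exists h. split; auto.
  apply (pushout_ext po); rewrite <- comp_assoc.
  - rewrite Hh1. exact Hsq.
  - rewrite Hh2. exact H2.
Qed.

Lemma pushout_trivial_cofibration_weq (a b c P : E) (f : Hom a b) (g : Hom a c)
  (i1 : Hom b P) (i2 : Hom c P) :
  is_pushout f g i1 i2 -> Cf _ _ g -> W _ _ g -> W _ _ i1.
Proof.
  intros po Cg Wg. apply weq_of_llp_fibrations.
  exact (pushout_trivial_cofibration_llp po Cg Wg).
Qed.

End ModelCategory.

Section Representatives.
Variable C : Category.

Definition iso_class (r : C) : C -> Prop := fun s => exists th : Hom r s, iso th.

Definition rep (r : C) : C := epsilon (inhabits r) (iso_class r).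

Lemma rep_spec (r : C) : iso_class r (rep r).
Proof. unfold rep. apply epsilon_spec. exists r, (idm r). apply iso_id. Qed.

Lemma iso_class_iso (r r' : C) (φ : Hom r r') : iso φ -> iso_class r = iso_class r'.
Proof.
  intros Hφ. destruct (iso_inverse Hφ) as [φ' [H1 H2]].
  apply functional_extensionality. intros s. apply propositional_extensionality. split.
  - intros [th Hth]. exists (th ∘ φ'). apply iso_comp; auto. eapply iso_of_inverse; eauto.
  - intros [th Hth]. exists (th ∘ φ). apply iso_comp; auto.
Qed.

Lemma rep_iso (r r' : C) (φ : Hom r r') : iso φ -> rep r = rep r'.
Proof.
  intros Hφ. unfold rep. rewrite (iso_class_iso Hφ).
  apply epsilon_inh_irrelevance. exists r', (idm r'). apply iso_id.
Qed.

Definition to_rep (r : C) : Hom r (rep r) :=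
  proj1_sig (constructive_indefinite_description _ (rep_spec r)).

Lemma to_rep_iso (r : C) : iso (to_rep r).
Proof. exact (proj2_sig (constructive_indefinite_description _ (rep_spec r))). Qed.

Definition from_rep (r : C) : Hom (rep r) r := proj1_sig (iso_inverse (to_rep_iso r)).

Lemma from_to_rep (r : C) : from_rep r ∘ to_rep r = idm r.
Proof. exact (proj1 (proj2_sig (iso_inverse (to_rep_iso r)))). Qed.

Lemma to_from_rep (r : C) : to_rep r ∘ from_rep r = idm (rep r).
Proof. exact (proj2 (proj2_sig (iso_inverse (to_rep_iso r)))). Qed.

Lemma from_rep_iso (r : C) : iso (from_rep r).
Proof. exact (iso_of_inverse (from_to_rep r) (to_from_rep r)). Qed.

End Representatives.

Lemma deg_rep (R : Category) (RS : GenReedy R) (r : R) : deg RS (rep r) = deg RS r.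
Proof. symmetry. apply (deg_iso RS (to_rep_iso r)). Qed.

Section LatchingMatching.
Variables (R E : Category) (RS : GenReedy R) (X : Functor R E) (c : R).

Lemma lfam_ext (L : E) (i : LFam RS X c L) s (u u' : Hom s c) hu nu hu' nu' :
  u = u' -> i s u hu nu = i s u' hu' nu'.
Proof. intros ->. f_equal; apply proof_irrelevance. Qed.

Lemma mfam_ext (M : E) (q : MFam RS X c M) s (u u' : Hom c s) hu nu hu' nu' :
  u = u' -> q s u hu nu = q s u' hu' nu'.
Proof. intros ->. f_equal; apply proof_irrelevance. Qed.

Section Latching.
Local Unset Implicit Arguments.
Variables (L : E) (i : LFam RS X c L).
Local Set Implicit Arguments.
Hypothesis lat : is_latching i.

Lemma latching_factor (Z : E) (cc : LFam RS X c Z) :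
  lcocone cc -> exists h : Hom L Z, forall s u hu nu, h ∘ i s u hu nu = cc s u hu nu.
Proof. intros Hc. destruct (proj2 lat Z cc Hc) as [h [H1 _]]. eauto. Qed.

Lemma latching_ext (Z : E) (h1 h2 : Hom L Z) :
  (forall s u hu nu, h1 ∘ i s u hu nu = h2 ∘ i s u hu nu) -> h1 = h2.
Proof.
  intros Heq.
  destruct (proj2 lat Z (fun s u hu nu => h2 ∘ i s u hu nu)) as [h [_ Hu]].
  - intros s s' u u' w hu nu hu' nu' hw e. rewrite <- comp_assoc. f_equal.
    eapply (proj1 lat); eauto.
  - rewrite (Hu h1), (Hu h2); auto.
Qed.

Lemma lat_can_exists : exists l : Hom L (X c), lat_can i l.
Proof.
  apply latching_factor.
  intros s s' u u' w hu nu hu' nu' hw ->. symmetry. apply fmap_comp.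
Qed.

Lemma lat_act_exists : exists a : Aut c -> Hom L L, lat_act i a.
Proof.
  apply (choice (fun t h => forall s u hu nu hu' nu',
           h ∘ i s u hu nu = i s (proj1_sig t ∘ u) hu' nu')).
  intros t.
  destruct (latching_factor (cc := fun s u hu nu =>
      i s (proj1_sig t ∘ u) (plus_aut_comp RS t hu) (not_iso_aut_comp t nu)))
    as [h Hh].
  - intros s s' u u' w hu nu hu' nu' hw e. apply (proj1 lat); auto.
    rewrite e. apply comp_assoc.
  - exists h. intros. rewrite Hh. apply lfam_ext. reflexivity.
Qed.

Lemma lat_act_is_action (a : Aut c -> Hom L L) : lat_act i a -> is_action a.
Proof.
  intros act. split.
  - intros h. apply latching_ext. intros s u hu nu.
    rewrite (act _ s u hu nu (plus_aut_comp RS _ hu) (not_iso_aut_comp _ nu)).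
    rewrite comp_idl. apply lfam_ext. apply comp_idl.
  - intros t t' h. apply latching_ext. intros s u hu nu.
    rewrite (act _ s u hu nu (plus_aut_comp RS _ hu) (not_iso_aut_comp _ nu)).
    assoc_r. rw (act t' s u hu nu (plus_aut_comp RS t' hu) (not_iso_aut_comp t' nu)).
    rw (act t s _ (plus_aut_comp RS t' hu) (not_iso_aut_comp t' nu)
          (plus_aut_comp RS t (plus_aut_comp RS t' hu))
          (not_iso_aut_comp t (not_iso_aut_comp t' nu))).
    apply lfam_ext. symmetry. apply comp_assoc.
Qed.

Lemma lat_can_equivariant (l : Hom L (X c)) (a : Aut c -> Hom L L) :
  lat_can i l -> lat_act i a -> equivariant a (fun t => fmap X (proj1_sig t)) l.
Proof.
  intros can act t. apply latching_ext. intros s u hu nu. assoc_r.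
  rw (act t s u hu nu (plus_aut_comp RS t hu) (not_iso_aut_comp t nu)).
  rw can. rw can. apply fmap_comp.
Qed.

End Latching.

Definition mat_act (M : E) (q : MFam RS X c M) (a : Aut c -> Hom M M) : Prop :=
  forall (t : Aut c) s (u : Hom c s) hu nu hu' nu',
    q s u hu nu ∘ a t = q s (u ∘ proj1_sig t) hu' nu'.

Section Matching.
Local Unset Implicit Arguments.
Variables (M : E) (q : MFam RS X c M).
Local Set Implicit Arguments.
Hypothesis mat : is_matching q.

Lemma matching_factor (Z : E) (cc : MFam RS X c Z) :
  mcone cc -> exists h : Hom Z M, forall s u hu nu, q s u hu nu ∘ h = cc s u hu nu.
Proof. intros Hc. destruct (proj2 mat Z cc Hc) as [h [H1 _]]. eauto. Qed.

Lemma matching_ext (Z : E) (h1 h2 : Hom Z M) :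
  (forall s u hu nu, q s u hu nu ∘ h1 = q s u hu nu ∘ h2) -> h1 = h2.
Proof.
  intros Heq.
  destruct (proj2 mat Z (fun s u hu nu => q s u hu nu ∘ h2)) as [h [_ Hu]].
  - intros s s' u u' w hu nu hu' nu' hw e. rewrite comp_assoc. f_equal.
    eapply (proj1 mat); eauto.
  - rewrite (Hu h1), (Hu h2); auto.
Qed.

Lemma mat_can_exists : exists m : Hom (X c) M, mat_can q m.
Proof.
  apply matching_factor.
  intros s s' u u' w hu nu hu' nu' hw ->. symmetry. apply fmap_comp.
Qed.

Lemma mat_act_exists : exists a : Aut c -> Hom M M, mat_act q a.
Proof.
  apply (choice (fun t h => forall s u hu nu hu' nu',
           q s u hu nu ∘ h = q s (u ∘ proj1_sig t) hu' nu')).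
  intros t.
  destruct (matching_factor (cc := fun s u hu nu =>
      q s (u ∘ proj1_sig t) (minus_comp_aut RS t hu) (not_iso_comp_aut t nu)))
    as [h Hh].
  - intros s s' u u' w hu nu hu' nu' hw e. apply (proj1 mat); auto.
    rewrite e. symmetry. apply comp_assoc.
  - exists h. intros. rewrite Hh. apply mfam_ext. reflexivity.
Qed.

Lemma mat_act_is_action (a : Aut c -> Hom M M) : mat_act q a -> is_action a.
Proof.
  intros act. split.
  - intros h. apply matching_ext. intros s u hu nu.
    rewrite (act _ s u hu nu (minus_comp_aut RS _ hu) (not_iso_comp_aut _ nu)).
    rewrite comp_idr. apply mfam_ext. apply comp_idr.
  - intros t t' h. apply matching_ext. intros s u hu nu.
    rewrite (act _ s u hu nu (minus_comp_aut RS _ hu) (not_iso_comp_aut _ nu)).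
    rewrite comp_assoc.
    rewrite (act t s u hu nu (minus_comp_aut RS t hu) (not_iso_comp_aut t nu)).
    rewrite (act t' s _ (minus_comp_aut RS t hu) (not_iso_comp_aut t nu)
          (minus_comp_aut RS t' (minus_comp_aut RS t hu))
          (not_iso_comp_aut t' (not_iso_comp_aut t nu))).
    apply mfam_ext. apply comp_assoc.
Qed.

Lemma mat_can_equivariant (m : Hom (X c) M) (a : Aut c -> Hom M M) :
  mat_can q m -> mat_act q a -> equivariant (fun t => fmap X (proj1_sig t)) a m.
Proof.
  intros can act t. apply matching_ext. intros s u hu nu. assoc_r.
  rw (act t s u hu nu (minus_comp_aut RS t hu) (not_iso_comp_aut t nu)).
  rw can. rw can. symmetry. apply fmap_comp.
Qed.

End Matching.
End LatchingMatching.

Lemma lat_map_exists (R E : Category) (RS : GenReedy R) (X Y : Functor R E)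
  (f : NatTrans X Y) (c : R) (LX : E) (iX : LFam RS X c LX) (LY : E)
  (iY : LFam RS Y c LY) :
  is_latching iX -> is_latching iY -> exists g : Hom LX LY, lat_map f iX iY g.
Proof.
  intros latX latY. apply (latching_factor latX).
  intros s s' u u' w hu nu hu' nu' hw e. assoc_r.
  rw (ntc_nat f w). rw (proj1 latY s s' u u' w hu nu hu' nu' hw e). reflexivity.
Qed.

Lemma mat_map_exists (R E : Category) (RS : GenReedy R) (X Y : Functor R E)
  (p : NatTrans X Y) (c : R) (MX : E) (qX : MFam RS X c MX) (MY : E)
  (qY : MFam RS Y c MY) :
  is_matching qX -> is_matching qY -> exists g : Hom MX MY, mat_map p qX qY g.
Proof.
  intros matX matY. apply (matching_factor matY).
  intros s s' u u' w hu nu hu' nu' hw e.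
  rewrite comp_assoc, <- (ntc_nat p w), <- comp_assoc.
  rewrite (proj1 matX s s' u u' w hu nu hu' nu' hw e). reflexivity.
Qed.

Lemma fmap_cancel (R E : Category) (Z : Functor R E) (a b : R) (f : Hom a b)
  (g : Hom b a) : g ∘ f = idm a -> fmap Z g ∘ fmap Z f = idm (Z a).
Proof. intros H. rewrite <- fmap_comp, H. apply fmap_id. Qed.

Lemma functor_action (R E : Category) (X : Functor R E) (c : R) :
  is_action (fun t : Aut c => fmap X (proj1_sig t)).
Proof. split; intros; simpl. apply fmap_id. apply fmap_comp. Qed.

Lemma equivariant_lift (R E : Category) (W Cf F : MorClass E)
  (Hproj : R_projective R W Cf F) (c : R) (x y u v : E)
  (ax : Aut c -> Hom x x) (ay : Aut c -> Hom y y)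
  (au : Aut c -> Hom u u) (av : Aut c -> Hom v v)
  (k : Hom x y) (k' : Hom u v) (top : Hom x u) (bot : Hom y v) :
  is_action ax -> is_action ay -> is_action au -> is_action av ->
  equivariant ax ay k -> cofG W F ax ay k -> W _ _ k ->
  equivariant au av k' -> F _ _ k' ->
  equivariant ax au top -> equivariant ay av bot -> k' ∘ top = bot ∘ k ->
  exists l : Hom y u, equivariant ay au l /\ l ∘ k = top /\ k' ∘ l = bot.
Proof.
  intros Hax Hay Hau Hav ek Ck Wk ek' Fk' etop ebot sq.
  pose (Ox := (existT _ x (exist _ ax Hax) : GObj E c)).
  pose (Oy := (existT _ y (exist _ ay Hay) : GObj E c)).
  pose (Ou := (existT _ u (exist _ au Hau) : GObj E c)).
  pose (Ov := (existT _ v (exist _ av Hav) : GObj E c)).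
  assert (sqG : GComp (exist _ k' ek' : GHom Ou Ov) (exist _ top etop : GHom Ox Ou)
              = GComp (exist _ bot ebot : GHom Oy Ov) (exist _ k ek : GHom Ox Oy)).
  { apply subset_eq_compat. exact sq. }
  destruct (mc_lift_tcof (Hproj c) (i := exist _ k ek : GHom Ox Oy)
              (p := exist _ k' ek' : GHom Ou Ov) Ck Wk Fk' sqG) as [[l el] [Hk Hk']].
  exists l. split; [exact el|]. split.
  - exact (f_equal (@proj1_sig _ _) Hk).
  - exact (f_equal (@proj1_sig _ _) Hk').
Qed.

Section Main.
Local Unset Implicit Arguments.
Variables (R : Category) (RS : GenReedy R) (E : Category) (W Cf F : MorClass E).
Hypothesis HE : is_model_category W Cf F.
Hypothesis Hproj : R_projective R W Cf F.
Variables (A B : Functor R E) (f : NatTrans A B).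
Hypothesis Hf : trivial_reedy_cofibration RS W F f.
Hypothesis HL : latching_trivial_cofibrations RS W Cf f.
Variables (X Y : Functor R E) (p : NatTrans X Y).
Hypothesis Hp : reedy_fibration RS F p.
Variables (a : NatTrans A X) (b : NatTrans B Y).
Hypothesis Hsq : forall r, p r ∘ a r = b r ∘ f r.
Local Set Implicit Arguments.

Local Notation aut_act Z := (fun t => fmap Z (proj1_sig t)).

Definition compatible_lift (n : nat) (lo : forall s, deg RS s < n -> Hom (B s) (X s))
  (c : R) (L : Hom (B c) (X c)) : Prop :=
  equivariant (aut_act B) (aut_act X) L /\ L ∘ f c = a c /\ p c ∘ L = b c /\
  (forall s (u : Hom s c) (hs : deg RS s < n), plus RS u -> ~ iso u ->
     L ∘ fmap B u = fmap X u ∘ lo s hs) /\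
  (forall s (u : Hom c s) (hs : deg RS s < n), minus RS u -> ~ iso u ->
     fmap X u ∘ L = lo s hs ∘ fmap B u).
Arguments compatible_lift {n} lo c L.

Section AtObject.
Local Unset Implicit Arguments.
Variable c : R.
Variables (LA LB : E) (iA : LFam RS A c LA) (iB : LFam RS B c LB).
Hypotheses (latA : is_latching iA) (latB : is_latching iB).
Variables (lA : Hom LA (A c)) (lB : Hom LB (B c)) (g : Hom LA LB)
  (aL : Aut c -> Hom LB LB).
Hypotheses (canA : lat_can iA lA) (canB : lat_can iB lB) (mapg : lat_map f iA iB g)
  (actL : lat_act iB aL).
(* [P] is [A_c ∪_{L_c A} L_c B]; [k] below is the relative latching map of [f]. *)
Variables (P : E) (i1 : Hom (A c) P) (i2 : Hom LB P).
Hypothesis po : is_pushout lA g i1 i2.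
Local Set Implicit Arguments.

Lemma relative_latching_map_exists :
  exists k : Hom P (B c), k ∘ i1 = f c /\ k ∘ i2 = lB.
Proof.
  apply (pushout_factor po). apply (latching_ext latA). intros s u hu nu. assoc_r.
  rw (canA s u hu nu). rw (mapg s u hu nu). rw (canB s u hu nu). apply (ntc_nat f u).
Qed.

Definition rel_lat_act (aP : Aut c -> Hom P P) : Prop :=
  forall t, aP t ∘ i1 = i1 ∘ fmap A (proj1_sig t) /\ aP t ∘ i2 = i2 ∘ aL t.

Lemma rel_lat_act_exists : exists aP, rel_lat_act aP.
Proof.
  apply (choice (fun t h => h ∘ i1 = i1 ∘ fmap A (proj1_sig t) /\ h ∘ i2 = i2 ∘ aL t)).
  intros t. apply (pushout_factor po). apply (latching_ext latA). intros s u hu nu.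
  assoc_r. rw (canA s u hu nu). rewrite <- (fmap_comp A u (proj1_sig t)).
  rewrite <- (canA s _ (plus_aut_comp RS t hu) (not_iso_aut_comp t nu)). assoc_r.
  rw (proj1 po). rw (mapg s _ (plus_aut_comp RS t hu) (not_iso_aut_comp t nu)).
  rw (mapg s u hu nu). rw (actL t s u hu nu (plus_aut_comp RS t hu) (not_iso_aut_comp t nu)).
  reflexivity.
Qed.

Variables (k : Hom P (B c)) (aP : Aut c -> Hom P P).
Hypotheses (k1 : k ∘ i1 = f c) (k2 : k ∘ i2 = lB) (actP : rel_lat_act aP).

Lemma rel_lat_act_is_action : is_action aP.
Proof.
  destruct (lat_act_is_action latB actL) as [aL1 aLc]. split.
  - intros h. apply (pushout_ext po).
    + rewrite (proj1 (actP _)). simpl. rewrite fmap_id, comp_idr, comp_idl. reflexivity.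
    + rewrite (proj2 (actP _)). rewrite aL1, comp_idr, comp_idl. reflexivity.
  - intros t t' h. apply (pushout_ext po); assoc_r.
    + rewrite (proj1 (actP _)). rw (proj1 (actP t')). rw (proj1 (actP t)). simpl.
      rewrite fmap_comp. assoc_r. reflexivity.
    + rewrite (proj2 (actP _)). rw (proj2 (actP t')). rw (proj2 (actP t)).
      rewrite aLc. reflexivity.
Qed.

Lemma relative_latching_map_equivariant : equivariant aP (aut_act B) k.
Proof.
  intros t. apply (pushout_ext po); assoc_r.
  - rw (proj1 (actP t)). rw k1. rw k1. apply (ntc_nat f).
  - rw (proj2 (actP t)). rw k2. rw k2. exact (lat_can_equivariant latB canB actL t).
Qed.

Lemma relative_latching_map_weq : W _ _ k.
Proof.
  destruct (HL c LA iA LB iB latA latB g mapg) as [Cg Wg].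
  apply (mc_2of3_right HE (f := i1)).
  - exact (pushout_trivial_cofibration_weq HE po Cg Wg).
  - simpl. rewrite k1. apply (proj2 Hf).
Qed.

Local Unset Implicit Arguments.
Variables (MX MY : E) (qX : MFam RS X c MX) (qY : MFam RS Y c MY).
Hypotheses (matX : is_matching qX) (matY : is_matching qY).
Variables (mX : Hom (X c) MX) (mY : Hom (Y c) MY) (g' : Hom MX MY)
  (aM : Aut c -> Hom MX MX).
Hypotheses (canX : mat_can qX mX) (canY : mat_can qY mY) (mapg' : mat_map p qX qY g')
  (actM : mat_act qX aM).
(* [Q] is [M_c X ×_{M_c Y} Y_c]; [k'] below is the relative matching map of [p]. *)
Variables (Q : E) (q1 : Hom Q MX) (q2 : Hom Q (Y c)).
Hypothesis pb : is_pullback g' mY q1 q2.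
Local Set Implicit Arguments.

Lemma relative_matching_map_exists :
  exists k' : Hom (X c) Q, q1 ∘ k' = mX /\ q2 ∘ k' = p c.
Proof.
  apply (pullback_factor pb). apply (matching_ext matY). intros s u hu nu. assoc_r.
  rw (mapg' s u hu nu). rw (canX s u hu nu). rw (canY s u hu nu). apply (ntc_nat p u).
Qed.

Definition rel_mat_act (aQ : Aut c -> Hom Q Q) : Prop :=
  forall t, q1 ∘ aQ t = aM t ∘ q1 /\ q2 ∘ aQ t = fmap Y (proj1_sig t) ∘ q2.

Lemma rel_mat_act_exists : exists aQ, rel_mat_act aQ.
Proof.
  apply (choice (fun t h => q1 ∘ h = aM t ∘ q1 /\ q2 ∘ h = fmap Y (proj1_sig t) ∘ q2)).
  intros t. apply (pullback_factor pb). apply (matching_ext matY). intros s u hu nu.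
  assoc_r. rw (mapg' s u hu nu).
  rw (actM t s u hu nu (minus_comp_aut RS t hu) (not_iso_comp_aut t nu)).
  rw (canY s u hu nu). rw (eq_sym (fmap_comp Y (proj1_sig t) u)).
  rewrite <- (canY s _ (minus_comp_aut RS t hu) (not_iso_comp_aut t nu)). assoc_r.
  rw (eq_sym (proj1 pb)). rw (mapg' s _ (minus_comp_aut RS t hu) (not_iso_comp_aut t nu)).
  reflexivity.
Qed.

Variables (k' : Hom (X c) Q) (aQ : Aut c -> Hom Q Q).
Hypotheses (k'1 : q1 ∘ k' = mX) (k'2 : q2 ∘ k' = p c) (actQ : rel_mat_act aQ).

Lemma rel_mat_act_is_action : is_action aQ.
Proof.
  destruct (mat_act_is_action matX actM) as [aM1 aMc]. split.
  - intros h. apply (pullback_ext pb).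
    + rewrite (proj1 (actQ _)). rewrite aM1, comp_idr, comp_idl. reflexivity.
    + rewrite (proj2 (actQ _)). simpl. rewrite fmap_id, comp_idr, comp_idl. reflexivity.
  - intros t t' h. apply (pullback_ext pb).
    + rewrite (proj1 (actQ _)), comp_assoc, (proj1 (actQ t)), <- comp_assoc.
      rewrite (proj1 (actQ t')), aMc. assoc_r. reflexivity.
    + rewrite (proj2 (actQ _)), comp_assoc, (proj2 (actQ t)), <- comp_assoc.
      rewrite (proj2 (actQ t')). simpl. rewrite fmap_comp. assoc_r. reflexivity.
Qed.

Lemma relative_matching_map_equivariant : equivariant (aut_act X) aQ k'.
Proof.
  intros t. apply (pullback_ext pb); assoc_r.
  - rw k'1. rewrite comp_assoc, (proj1 (actQ t)). assoc_r. rw k'1.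
    exact (mat_can_equivariant matX canX actM t).
  - rw k'2. rewrite comp_assoc, (proj2 (actQ t)). assoc_r. rw k'2. apply (ntc_nat p).
Qed.

Section Lift.
Local Unset Implicit Arguments.
Variables (n : nat) (lo : forall s, deg RS s < n -> Hom (B s) (X s)).
Hypotheses (lo_f : forall s hs, lo s hs ∘ f s = a s)
  (lo_p : forall s hs, p s ∘ lo s hs = b s)
  (lo_nat : forall s r (u : Hom s r) hs hr, fmap X u ∘ lo s hs = lo r hr ∘ fmap B u).
Hypothesis hc : deg RS c = n.
Local Set Implicit Arguments.

Lemma lo_irr s h1 h2 : lo s h1 = lo s h2.
Proof. f_equal. apply proof_irrelevance. Qed.

Lemma deg_lt_of_plus s (u : Hom s c) : plus RS u -> ~ iso u -> deg RS s < n.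
Proof. intros. rewrite <- hc. apply (deg_plus (f := u)); auto. Qed.

Lemma deg_lt_of_minus s (u : Hom c s) : minus RS u -> ~ iso u -> deg RS s < n.
Proof. intros. rewrite <- hc. apply (deg_minus (f := u)); auto. Qed.

Lemma latching_lower_lift_exists : exists lX : Hom LB (X c),
  forall s u hu nu, lX ∘ iB s u hu nu = fmap X u ∘ lo s (deg_lt_of_plus hu nu).
Proof.
  apply (latching_factor latB). intros s s' u u' w hu nu hu' nu' hw e. assoc_r.
  rewrite <- (lo_nat _ _ w (deg_lt_of_plus hu nu) (deg_lt_of_plus hu' nu')).
  rewrite comp_assoc, <- fmap_comp, <- e. reflexivity.
Qed.

Lemma matching_lower_lift_exists : exists mB : Hom (B c) MX,
  forall s u hu nu, qX s u hu nu ∘ mB = lo s (deg_lt_of_minus hu nu) ∘ fmap B u.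
Proof.
  apply (matching_factor matX). intros s s' u u' w hu nu hu' nu' hw e.
  rewrite comp_assoc, (lo_nat _ _ w (deg_lt_of_minus hu nu) (deg_lt_of_minus hu' nu')).
  assoc_r. rewrite <- fmap_comp, <- e. reflexivity.
Qed.

Local Unset Implicit Arguments.
Variables (lX : Hom LB (X c)) (mB : Hom (B c) MX).
Hypotheses (HlX : forall s u hu nu, lX ∘ iB s u hu nu = fmap X u ∘ lo s (deg_lt_of_plus hu nu))
  (HmB : forall s u hu nu, qX s u hu nu ∘ mB = lo s (deg_lt_of_minus hu nu) ∘ fmap B u).
Local Set Implicit Arguments.

Lemma top_exists : exists T : Hom P (X c), T ∘ i1 = a c /\ T ∘ i2 = lX.
Proof.
  apply (pushout_factor po). apply (latching_ext latA). intros s u hu nu. assoc_r.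
  rw (canA s u hu nu). rw (mapg s u hu nu). rw (HlX s u hu nu). rw lo_f.
  apply (ntc_nat a).
Qed.

Lemma bottom_exists : exists Bo : Hom (B c) Q, q1 ∘ Bo = mB /\ q2 ∘ Bo = b c.
Proof.
  apply (pullback_factor pb). apply (matching_ext matY). intros s u hu nu. assoc_r.
  rw (mapg' s u hu nu). rw (HmB s u hu nu). rw lo_p. rw (canY s u hu nu).
  apply (ntc_nat b).
Qed.

Variables (T : Hom P (X c)) (Bo : Hom (B c) Q).
Hypotheses (T1 : T ∘ i1 = a c) (T2 : T ∘ i2 = lX) (Bo1 : q1 ∘ Bo = mB)
  (Bo2 : q2 ∘ Bo = b c).

Lemma top_equivariant : equivariant aP (aut_act X) T.
Proof.
  intros t. apply (pushout_ext po); assoc_r.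
  - rw (proj1 (actP t)). rw T1. rw T1. apply (ntc_nat a).
  - rw (proj2 (actP t)). rw T2. rw T2. apply (latching_ext latB). intros s u hu nu.
    assoc_r. rw (actL t s u hu nu (plus_aut_comp RS t hu) (not_iso_aut_comp t nu)).
    rw HlX. rw HlX. rw (eq_sym (fmap_comp X u (proj1_sig t))).
    rewrite (lo_irr (deg_lt_of_plus (plus_aut_comp RS t hu) (not_iso_aut_comp t nu))
               (deg_lt_of_plus hu nu)).
    reflexivity.
Qed.

Lemma bottom_equivariant : equivariant (aut_act B) aQ Bo.
Proof.
  intros t. apply (pullback_ext pb); assoc_r.
  - rw Bo1. rewrite comp_assoc, (proj1 (actQ t)). assoc_r. rw Bo1.
    apply (matching_ext matX). intros s u hu nu. assoc_r.
    rw (actM t s u hu nu (minus_comp_aut RS t hu) (not_iso_comp_aut t nu)).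
    rw HmB. rw HmB. rw (eq_sym (fmap_comp B (proj1_sig t) u)).
    rewrite (lo_irr (deg_lt_of_minus (minus_comp_aut RS t hu) (not_iso_comp_aut t nu))
               (deg_lt_of_minus hu nu)).
    reflexivity.
  - rw Bo2. rewrite comp_assoc, (proj2 (actQ t)). assoc_r. rw Bo2. apply (ntc_nat b).
Qed.

Lemma lifting_square : k' ∘ T = Bo ∘ k.
Proof.
  apply (pullback_ext pb); apply (pushout_ext po); assoc_r.
  - rw T1. rw k'1. rw k1. rw Bo1. apply (matching_ext matX). intros s u hu nu. assoc_r.
    rw canX. rw HmB. rewrite <- (ntc_nat f u). rw lo_f. symmetry. apply (ntc_nat a).
  - rw T2. rw k'1. rw k2. rw Bo1. apply (matching_ext matX). intros s u hu nu.
    apply (latching_ext latB). intros s' v hv nv. assoc_r.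
    rw canX. rw HlX. rw HmB. rw canB.
    rw (eq_sym (fmap_comp X v u)). rw (eq_sym (fmap_comp B v u)). apply lo_nat.
  - rw T1. rw k'2. rw k1. rw Bo2. apply Hsq.
  - rw T2. rw k'2. rw k2. rw Bo2. apply (latching_ext latB). intros s' v hv nv. assoc_r.
    rw HlX. rw (ntc_nat p v). rw lo_p. rw canB. symmetry. apply (ntc_nat b).
Qed.

Lemma compatible_lift_exists : exists L, compatible_lift lo c L.
Proof.
  destruct (equivariant_lift Hproj rel_lat_act_is_action (functor_action B c)
              (functor_action X c) rel_mat_act_is_action
              relative_latching_map_equivariant
              (proj1 Hf c LA iA LB iB latA latB lA lB g aL canA canB mapg actL
                 P i1 i2 po k aP k1 k2 actP)
              relative_latching_map_weq relative_matching_map_equivariant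
              (Hp c MX qX MY qY matX matY mX mY g' canX canY mapg' Q q1 q2 pb k' k'1 k'2)
              top_equivariant bottom_equivariant lifting_square)
    as [L [eL [Lk k'L]]].
  exists L. repeat split.
  - exact eL.
  - rewrite <- k1, comp_assoc, Lk. exact T1.
  - rewrite <- k'2, <- comp_assoc, k'L. exact Bo2.
  - intros s u hs hu nu. rewrite <- (canB s u hu nu), <- k2. assoc_r.
    rw Lk. rw T2. rw HlX. rewrite (lo_irr (deg_lt_of_plus hu nu) hs). reflexivity.
  - intros s u hs hu nu. rewrite <- (canX s u hu nu), <- k'1. assoc_r.
    rw k'L. rw Bo1. rw HmB. rewrite (lo_irr (deg_lt_of_minus hu nu) hs). reflexivity.
Qed.

End Lift.
End AtObject.

Definition partial_lift (n : nat) (lo : forall s, deg RS s < n -> Hom (B s) (X s)) : Prop :=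
  (forall s hs, lo s hs ∘ f s = a s) /\ (forall s hs, p s ∘ lo s hs = b s) /\
  (forall s r (u : Hom s r) hs hr, fmap X u ∘ lo s hs = lo r hr ∘ fmap B u).

Local Unset Implicit Arguments.
Hypothesis Hlat : forall (Z : Functor R E) (r : R),
  exists (L : E) (i : LFam RS Z r L), is_latching i.
Hypothesis Hmat : forall (Z : Functor R E) (r : R),
  exists (M : E) (q : MFam RS Z r M), is_matching q.
Local Set Implicit Arguments.

Arguments partial_lift : clear implicits.

Lemma local_lift n lo : partial_lift n lo ->
  forall c, deg RS c = n -> exists L, compatible_lift lo c L.
Proof.
  intros [lo_f [lo_p lo_nat]] c hc.
  destruct (Hlat A c) as [LA [iA latA]]. destruct (Hlat B c) as [LB [iB latB]].
  destruct (Hmat X c) as [MX [qX matX]]. destruct (Hmat Y c) as [MY [qY matY]].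
  destruct (lat_can_exists latA) as [lA canA].
  destruct (lat_can_exists latB) as [lB canB].
  destruct (mat_can_exists matX) as [mX canX].
  destruct (mat_can_exists matY) as [mY canY].
  destruct (lat_map_exists f latA latB) as [g mapg].
  destruct (mat_map_exists p matX matY) as [g' mapg'].
  destruct (lat_act_exists latB) as [aL actL].
  destruct (mat_act_exists matX) as [aM actM].
  destruct (mc_pushouts HE lA g) as [P [i1 [i2 po]]].
  destruct (mc_pullbacks HE g' mY) as [Q [q1 [q2 pb]]].
  destruct (relative_latching_map_exists latA canA canB mapg po) as [k [k1 k2]].
  destruct (rel_lat_act_exists latA canA mapg actL po) as [aP actP].
  destruct (relative_matching_map_exists matY canX canY mapg' pb) as [k' [k'1 k'2]].
  destruct (rel_mat_act_exists matY canY mapg' actM pb) as [aQ actQ].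
  destruct (latching_lower_lift_exists latB lo_nat hc) as [lX HlX].
  destruct (matching_lower_lift_exists matX lo_nat hc) as [mB HmB].
  destruct (top_exists latA canA mapg po lo_f HlX) as [T [T1 T2]].
  destruct (bottom_exists matY canY mapg' pb lo_p HmB) as [Bo [Bo1 Bo2]].
  eapply compatible_lift_exists; eauto.
Qed.

Section Extension.
Local Unset Implicit Arguments.
Variables (n : nat) (lo : forall s, deg RS s < n -> Hom (B s) (X s)).
Hypothesis Hlo : partial_lift n lo.
Variable Lc : forall c, deg RS c = n -> Hom (B c) (X c).
Hypothesis HLc : forall c hc, compatible_lift lo c (Lc c hc).
Local Set Implicit Arguments.

(* Transporting from the representative of the isomorphism class is what
   makes the lifts natural for isomorphisms. *)
Definition lift_at r (hr : deg RS r = n) : Hom (B r) (X r) :=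
  fmap X (from_rep r) ∘ (Lc (rep r) (eq_trans (deg_rep RS r) hr) ∘ fmap B (to_rep r)).

Lemma lift_at_f r hr : lift_at hr ∘ f r = a r.
Proof.
  unfold lift_at. destruct (HLc (rep r) (eq_trans (deg_rep RS r) hr)) as [_ [Lf _]].
  assoc_r. rewrite <- (ntc_nat f (to_rep r)). rw Lf. rw (ntc_nat a (to_rep r)).
  rw (fmap_cancel X (from_to_rep r)). apply comp_idl.
Qed.

Lemma lift_at_p r hr : p r ∘ lift_at hr = b r.
Proof.
  unfold lift_at. destruct (HLc (rep r) (eq_trans (deg_rep RS r) hr)) as [_ [_ [Lp _]]].
  assoc_r. rw (ntc_nat p (from_rep r)). rw Lp. rw (ntc_nat b (to_rep r)).
  rw (fmap_cancel Y (from_to_rep r)). apply comp_idl.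
Qed.

Lemma lift_at_plus r hr s (u : Hom s r) (hs : deg RS s < n) :
  plus RS u -> ~ iso u -> lift_at hr ∘ fmap B u = fmap X u ∘ lo s hs.
Proof.
  intros hu nu. unfold lift_at.
  destruct (HLc (rep r) (eq_trans (deg_rep RS r) hr)) as [_ [_ [_ [Lplus _]]]].
  assoc_r. rw (eq_sym (fmap_comp B u (to_rep r))).
  rw (Lplus s _ hs (plus_comp hu (plus_iso RS (to_rep_iso r)))
        (not_iso_comp_l (to_rep_iso r) nu)).
  rewrite fmap_comp. assoc_r. rw (fmap_cancel X (from_to_rep r)). apply comp_idl.
Qed.

Lemma lift_at_minus r hr s (u : Hom r s) (hs : deg RS s < n) :
  minus RS u -> ~ iso u -> fmap X u ∘ lift_at hr = lo s hs ∘ fmap B u.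
Proof.
  intros hu nu. unfold lift_at.
  destruct (HLc (rep r) (eq_trans (deg_rep RS r) hr)) as [_ [_ [_ [_ Lminus]]]].
  rw (eq_sym (fmap_comp X (from_rep r) u)).
  rw (Lminus s _ hs (minus_comp (minus_iso RS (from_rep_iso r)) hu)
        (not_iso_comp_r (from_rep_iso r) nu)).
  rewrite fmap_comp. assoc_r. rewrite (fmap_cancel B (from_to_rep r)), comp_idr.
  reflexivity.
Qed.

Lemma transport_lift c c' (hc : deg RS c = n) (hc' : deg RS c' = n) (e : c = c')
  r r' (θ : Hom r c) (θ' : Hom c r) (ψ : Hom r' c') (ψ' : Hom c' r') (φ : Hom r r') :
  θ' ∘ θ = idm r -> θ ∘ θ' = idm c -> ψ' ∘ ψ = idm r' -> ψ ∘ ψ' = idm c' -> iso φ ->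
  fmap X ψ' ∘ (Lc c' hc' ∘ (fmap B ψ ∘ fmap B φ)) =
  fmap X φ ∘ (fmap X θ' ∘ (Lc c hc ∘ fmap B θ)).
Proof.
  intros H1 H2 H3 H4 Hφ. subst c'. rewrite (proof_irrelevance _ hc' hc).
  assert (Ht : iso (ψ ∘ φ ∘ θ')).
  { apply iso_comp; [exists θ; auto|]. apply iso_comp; [exact Hφ|]. exists ψ'; auto. }
  destruct (HLc c hc) as [Leqv _]. specialize (Leqv (exist _ _ Ht)). simpl in Leqv.
  replace (fmap B ψ ∘ fmap B φ) with (fmap B (ψ ∘ φ ∘ θ') ∘ fmap B θ).
  2:{ rewrite <- !fmap_comp. f_equal. assoc_r. rewrite H1, comp_idr. reflexivity. }
  rw Leqv. rw (eq_sym (fmap_comp X (ψ ∘ (φ ∘ θ')) ψ')).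
  rw (eq_sym (fmap_comp X θ' φ)).
  rewrite (comp_assoc (φ ∘ θ') ψ ψ'), H3, comp_idl. reflexivity.
Qed.

Lemma lift_at_iso r r' (φ : Hom r r') hr hr' :
  iso φ -> lift_at hr' ∘ fmap B φ = fmap X φ ∘ lift_at hr.
Proof.
  intros Hφ. unfold lift_at. assoc_r.
  apply (transport_lift _ _ (rep_iso Hφ)); auto using from_to_rep, to_from_rep.
Qed.

Lemma deg_eq_of_not_lt s : deg RS s < S n -> ~ deg RS s < n -> deg RS s = n.
Proof. lia. Qed.

Definition extend s (hs : deg RS s < S n) : Hom (B s) (X s) :=
  match lt_dec (deg RS s) n with
  | left h => lo s h
  | right nh => lift_at (deg_eq_of_not_lt hs nh)
  end.

Lemma extend_lt s hs (h : deg RS s < n) : extend hs = lo s h.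
Proof.
  unfold extend. destruct (lt_dec (deg RS s) n) as [h0|nh]; [|contradiction].
  f_equal. apply proof_irrelevance.
Qed.

Lemma extend_eq s hs (he : deg RS s = n) : extend hs = lift_at he.
Proof.
  unfold extend. destruct (lt_dec (deg RS s) n) as [h0|nh]; [lia|].
  f_equal. apply proof_irrelevance.
Qed.

Lemma extend_nat_minus s r (u : Hom s r) hs hr :
  minus RS u -> fmap X u ∘ extend hs = extend hr ∘ fmap B u.
Proof.
  intros hu. pose proof (deg_minus_le hu). destruct Hlo as [_ [_ lo_nat]].
  destruct (lt_dec (deg RS s) n) as [h0|nh].
  - rewrite (extend_lt hs h0), (extend_lt hr (Nat.le_lt_trans _ _ _ H h0)). apply lo_nat.
  - assert (he : deg RS s = n) by lia.
    destruct (classic (iso u)) as [Hi|Hn].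
    + assert (he' : deg RS r = n) by (rewrite <- (deg_iso RS Hi); auto).
      rewrite (extend_eq hs he), (extend_eq hr he'). symmetry. apply lift_at_iso; auto.
    + assert (h1 : deg RS r < n) by (rewrite <- he; apply (deg_minus hu Hn)).
      rewrite (extend_eq hs he), (extend_lt hr h1). apply lift_at_minus; auto.
Qed.

Lemma extend_nat_plus s r (u : Hom s r) hs hr :
  plus RS u -> fmap X u ∘ extend hs = extend hr ∘ fmap B u.
Proof.
  intros hu. pose proof (deg_plus_le hu). destruct Hlo as [_ [_ lo_nat]].
  destruct (lt_dec (deg RS r) n) as [h0|nh].
  - rewrite (extend_lt hr h0), (extend_lt hs (Nat.le_lt_trans _ _ _ H h0)). apply lo_nat.
  - assert (he : deg RS r = n) by lia.
    destruct (classic (iso u)) as [Hi|Hn].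
    + assert (he' : deg RS s = n) by (rewrite (deg_iso RS Hi); auto).
      rewrite (extend_eq hr he), (extend_eq hs he'). symmetry. apply lift_at_iso; auto.
    + assert (h1 : deg RS s < n) by (rewrite <- he; apply (deg_plus hu Hn)).
      rewrite (extend_eq hr he), (extend_lt hs h1). symmetry. apply lift_at_plus; auto.
Qed.

Lemma extend_partial_lift : partial_lift (S n) extend.
Proof.
  destruct Hlo as [lo_f [lo_p _]]. split; [|split].
  - intros s hs. destruct (lt_dec (deg RS s) n) as [h0|nh].
    + rewrite (extend_lt hs h0). apply lo_f.
    + rewrite (extend_eq hs (deg_eq_of_not_lt hs nh)). apply lift_at_f.
  - intros s hs. destruct (lt_dec (deg RS s) n) as [h0|nh].
    + rewrite (extend_lt hs h0). apply lo_p.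
    + rewrite (extend_eq hs (deg_eq_of_not_lt hs nh)). apply lift_at_p.
  - intros s r u hs hr. destruct (fact_ex RS u) as [c [h [g [Hh [Hg ->]]]]].
    assert (hc : deg RS c < S n) by (pose proof (deg_minus_le Hh); lia).
    rewrite (fmap_comp X), (fmap_comp B). assoc_r.
    rewrite (extend_nat_minus hs hc Hh), comp_assoc, (extend_nat_plus hc hr Hg).
    assoc_r. reflexivity.
Qed.

End Extension.

Lemma partial_lift_step n lo : partial_lift n lo ->
  exists lo', partial_lift (S n) lo' /\ forall s h h', lo' s h' = lo s h.
Proof.
  intros Hlo.
  destruct (non_dep_dep_functional_choice choice
              (fun c => deg RS c = n -> Hom (B c) (X c))
              (fun c (Lc : deg RS c = n -> Hom (B c) (X c)) =>
                 forall hc, compatible_lift lo c (Lc hc))) as [Lc HLc].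
  { intros c. destruct (Nat.eq_dec (deg RS c) n) as [hc|nc].
    - destruct (local_lift Hlo hc) as [L HL']. exists (fun _ => L). auto.
    - exists (fun hc => False_rect _ (nc hc)). intros hc. contradiction. }
  exists (extend lo Lc). split.
  - apply extend_partial_lift; auto.
  - intros s h h'. apply extend_lt.
Qed.

Definition stage n := { lo : forall s, deg RS s < n -> Hom (B s) (X s) | partial_lift n lo }.

Lemma partial_lift_0 : partial_lift 0 (fun s h => False_rect _ (Nat.nlt_0_r _ h)).
Proof. repeat split; intros; exfalso; lia. Qed.

Definition next_stage n (st : stage n) : stage (S n) :=
  let e := constructive_indefinite_description _ (partial_lift_step (proj2_sig st)) in
  exist _ (proj1_sig e) (proj1 (proj2_sig e)).

Lemma next_stage_agrees n (st : stage n) s h h' :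
  proj1_sig (next_stage st) s h' = proj1_sig st s h.
Proof.
  exact (proj2 (proj2_sig (constructive_indefinite_description _
                             (partial_lift_step (proj2_sig st)))) s h h').
Qed.

Fixpoint stage_at n : stage n :=
  match n with
  | 0 => exist _ _ partial_lift_0
  | S m => next_stage (stage_at m)
  end.

Lemma stage_at_agrees m n s (h : deg RS s < n) (h' : deg RS s < m) :
  n <= m -> proj1_sig (stage_at m) s h' = proj1_sig (stage_at n) s h.
Proof.
  induction m as [|m IH]; intros Hnm.
  - exfalso. lia.
  - destruct (Nat.eq_dec n (S m)) as [->|Hne].
    + f_equal. apply proof_irrelevance.
    + assert (h'' : deg RS s < m) by lia.
      transitivity (proj1_sig (stage_at m) s h'').
      * exact (next_stage_agrees (stage_at m) h'' h').
      * apply IH. lia.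
Qed.

Definition lift_component r : Hom (B r) (X r) :=
  proj1_sig (stage_at (S (deg RS r))) r (Nat.lt_succ_diag_r _).

Lemma lift_component_stage m r h : proj1_sig (stage_at m) r h = lift_component r.
Proof. unfold lift_component. apply stage_at_agrees. lia. Qed.

Lemma lift_component_nat s r (u : Hom s r) :
  lift_component r ∘ fmap B u = fmap X u ∘ lift_component s.
Proof.
  pose (m := S (deg RS s + deg RS r)).
  assert (hs : deg RS s < m) by (unfold m; lia).
  assert (hr : deg RS r < m) by (unfold m; lia).
  destruct (proj2_sig (stage_at m)) as [_ [_ Hnat]].
  rewrite <- (lift_component_stage hs), <- (lift_component_stage hr).
  symmetry. apply Hnat.
Qed.

Lemma reedy_lift : exists l : NatTrans B X, forall r, l r ∘ f r = a r /\ p r ∘ l r = b r.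
Proof.
  exists {| ntc := lift_component; ntc_nat := lift_component_nat |}. intros r. simpl.
  destruct (proj2_sig (stage_at (S (deg RS r)))) as [Hf_ [Hp_ _]]. split.
  - apply Hf_.
  - apply Hp_.
Qed.

End Main.

Theorem lemma5p2 (R : Category) (RS : GenReedy R) (E : Category)
  (W Cf F : MorClass E)
  (HE : is_model_category W Cf F)
  (Hproj : R_projective R W Cf F)
  (Hlat : forall (X : Functor R E) (r : R),
      exists (L : E) (i : LFam RS X r L), is_latching i)
  (Hmat : forall (X : Functor R E) (r : R),
      exists (M : E) (q : MFam RS X r M), is_matching q)
  (A B : Functor R E) (f : NatTrans A B)
  (Hf : trivial_reedy_cofibration RS W F f)
  (HL : latching_trivial_cofibrations RS W Cf f) :
  forall (X Y : Functor R E) (p : NatTrans X Y),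
    reedy_fibration RS F p -> llp_nat f p.
Proof.
  intros X Y p Hp a b Hsq.
  exact (reedy_lift HE Hproj Hf HL Hp Hsq Hlat Hmat).
Qed.
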